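(* Let $G$ be an abelian group of order $v$, and let $m>1$, $k\ge 1$ be integers. A non-disjoint $(v,m,k,1)$-SEDF exists in $G$ if and only if $m=2$ and $v=k^2$.
   Context: Groups are written additively. For subsets $A,B$ of $G$, $\Delta(A,B)$ is the multiset $\{a-b:a\in A,b\in B\}$ and $\lambda G$ is the multiset with each element of $G$ exactly $\lambda$ times. For $G$ of order $v$ and $m>1$, a family of $k$-subsets $\{A_1,\dots,A_m\}$ of $G$ (not required to be disjoint) is a non-disjoint $(v,m,k,\lambda)$-SEDF if for each $1\le i\le m$ the multiset union $\bigcup_{j\neq i}\Delta(A_i,A_j)$ equals $\lambda G$. *)

From mathcomp Require Import all_boot all_order all_algebra.
Set Implicit Arguments. Unset Strict Implicit. Unset Printing Implicit Defensive.
Import GRing.Theory.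
Local Open Scope ring_scope.

(* Delta(A,B) as a multiset: multiplicity of g is #{(a,b) in A x B | a - b = g}.
   The multiset union over j <> i of Delta(A_i, A_j) equals lam G iff every
   g in G has total multiplicity exactly lam. *)
Definition delta_mult (G : finZmodType) (A B : {set G}) (g : G) : nat :=
  #|[set p : G * G | [&& p.1 \in A, p.2 \in B & p.1 - p.2 == g]]|.

(* Non-disjoint (v,m,k,lam)-SEDF in G (v = #|G|), family indexed by 'I_m,
   sets not required to be disjoint (nor distinct). *)
Definition is_SEDF (G : finZmodType) (m k lam : nat) (A : 'I_m -> {set G}) : Prop :=
  (1 < m)%N /\ (forall i, #|A i| = k) /\
  (forall (i : 'I_m) (g : G), (\sum_(j < m | j != i) delta_mult (A i) (A j) g)%N = lam).

(* In row i of a non-disjoint SEDF, the multiplicity of 0 in Delta(A_i, A_j) is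
   |A_i ∩ A_j|, so for lambda = 1 each A_i meets exactly one other A_j. A third
   set A_l would then see a common element x of A_i and A_j twice, as y - x with
   y in A_l, both in Delta(A_l, A_i) and in Delta(A_l, A_j); hence m = 2, and
   counting all k^2 differences gives v = k^2. Conversely, if v = k^2 take a
   subgroup H of order k and the negatives of a transversal of its cosets: every
   element of G is then uniquely a difference of the two. *)

From mathcomp Require Import all_boot all_order all_algebra all_fingroup all_solvable.
From mathcomp Require Import zify.
Set Implicit Arguments. Unset Strict Implicit. Unset Printing Implicit Defensive.

Import GRing.Theory FinRing.Theory.

Section AbelianSubgroups.
Local Open Scope group_scope.

Lemma abelian_subgroup_of_order (gT : finGroupType) (G : {group gT}) d :
  abelian G -> d %| #|G| -> exists2 H : {group gT}, H \subset G & #|H| = d.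
Proof.
elim/ltn_ind: d gT G => d IHd gT G abG dvd_dG.
have d_gt0 : 0 < d := dvdn_gt0 (cardG_gt0 G) dvd_dG.
have [d_le1 | d_gt1] := leqP d 1.
  by exists 1%G; rewrite ?sub1G // cards1; lia.
pose p := pdiv d; have p_pr : prime p := pdiv_prime d_gt1.
have p_dvd_d : p %| d := pdiv_dvd d.
have [z Gz oz] := Cauchy p_pr (dvdn_trans p_dvd_d dvd_dG).
have nsZG : <[z]> <| G by rewrite -sub_abelian_normal ?cycle_subG.
have cardGZ : #|G / <[z]>| = #|G| %/ p.
  by rewrite card_quotient ?normal_norm // -divgS ?cycle_subG // -oz.
have [||Hb sHbG oHb] := IHd (d %/ p) _ _ (G / <[z]>)%G (quotient_abelian _ abG).
- by rewrite ltn_Pdiv ?prime_gt1.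
- by rewrite cardGZ dvdn_divRL ?(dvdn_trans p_dvd_d dvd_dG) // divnK.
have [H defHb sZH sHG] := inv_quotientS nsZG sHbG.
exists H => //.
rewrite -(Lagrange sZH) -card_quotient; last exact: subset_trans sHG (normal_norm nsZG).
by rewrite -defHb oHb -oz mulnC divnK // oz.
Qed.

End AbelianSubgroups.

Section DifferenceCounts.
Variable G : finZmodType.
Local Open Scope ring_scope.

Lemma delta_multE (A B : {set G}) g :
  delta_mult A B g = #|[set a in A | a - g \in B]|.
Proof.
have inj_pair : injective (fun a : G => (a, a - g)) by move=> a b [].
rewrite -(card_imset _ inj_pair); apply: eq_card => -[a b]; rewrite !inE /=.
apply/and3P/imsetP => [[Aa Bb /eqP ab_g] | [c]].
  have b_def : b = a - g by rewrite -ab_g opprB addrC subrK.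
  by exists a; rewrite ?inE -b_def ?Aa ?Bb.
by rewrite inE => /andP [Ac Bcg] [-> ->]; split; rewrite // opprB addrC subrK.
Qed.

Lemma delta_mult0 (A B : {set G}) : delta_mult A B 0 = #|A :&: B|.
Proof. by rewrite delta_multE; apply: eq_card => a; rewrite !inE subr0. Qed.

Lemma delta_mult_gt0 (A B : {set G}) a b :
  a \in A -> b \in B -> (0 < delta_mult A B (a - b)%R)%N.
Proof. by move=> Aa Bb; apply/card_gt0P; exists (a, b); rewrite inE /= Aa Bb eqxx. Qed.

Lemma delta_multN (A B : {set G}) g : delta_mult B A g = delta_mult A B (- g).
Proof.
pose swap (p : G * G) := (p.2, p.1).
have swapK : involutive swap by case.
rewrite /delta_mult -(card_imset _ (inv_inj swapK)) (can2_imset_pre _ swapK swapK).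
by apply: eq_card => -[a b]; rewrite !inE /= -eqr_opp opprB andbCA.
Qed.

Lemma sum_delta_mult (A B : {set G}) :
  (\sum_g delta_mult A B g)%N = (#|A| * #|B|)%N.
Proof.
rewrite -cardsX -sum1_card (partition_big (fun p => p.1 - p.2) predT) //=.
apply: eq_bigr => g _; rewrite /delta_mult -sum1_card.
by apply: eq_bigl => p; rewrite !inE andbA.
Qed.

Lemma card_mul_delta_mult1 (A B : {set G}) :
  (forall g, delta_mult A B g = 1%N) -> (#|A| * #|B|)%N = #|G|.
Proof. by move=> AB1; rewrite -sum_delta_mult (eq_bigr _ (fun g _ => AB1 g)) sum1_card. Qed.

Lemma delta_mult_subgroup_transversal (H : {group G}) (X : {set G}) g :
  is_transversal X (rcosets H [set: G]) [set: G] ->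
  delta_mult H [set x | - x \in X] g = 1%N.
Proof.
move=> /and3P [_ _ /forall_inP trX].
(* a |-> g - a maps the pairs counted onto X :&: H :* g, a singleton. *)
have Hg_coset : (H :* g)%g \in rcosets H [set: G] by apply/rcosetsP; exists g; rewrite ?inE.
have inj_sub : injective (fun a : G => g - a) by move=> a b /addrI /oppr_inj.
rewrite delta_multE -(eqP (trX _ Hg_coset)) -(card_preimset _ inj_sub).
apply: eq_card => a; rewrite !inE opprB mem_rcoset zmodMgE zmodVgE subKr andbC.
by rewrite -[g - a]opprB -zmodVgE groupV.
Qed.

Lemma delta_mult1_exists d : (d %| #|G|)%N ->
  exists2 A : {set G}, #|A| = d & exists B, forall g, delta_mult A B g = 1%N.
Proof.
move=> dvd_dG.
have [|H _ cardH] := @abelian_subgroup_of_order _ [set: G]%G d (zmod_abelian _).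
  by rewrite cardsT.
exists H => //; exists [set x | - x \in transversal (rcosets H [set: G]) [set: G]].
by move=> g; apply/delta_mult_subgroup_transversal/transversalP/rcosets_partition/subsetT.
Qed.

End DifferenceCounts.

Lemma exists_ord_neq2 m (i j : 'I_m) : 2 < m -> exists l : 'I_m, (l != i) && (l != j).
Proof.
move=> m_gt2; have : 0 < #|~: [set i; j]|.
  by have := cardsC [set i; j]; rewrite cards2 card_ord; lia.
by case/card_gt0P => l; rewrite !inE negb_or; exists l.
Qed.

Section LambdaOne.
Variables (G : finZmodType) (m : nat) (A : 'I_m -> {set G}).
Hypothesis rowA : forall i g, \sum_(j < m | j != i) delta_mult (A i) (A j) g = 1.

Lemma lambda1_meet i : exists2 j, j != i & A i :&: A j != set0.
Proof.
have : \sum_(j < m | j != i) delta_mult (A i) (A j) 0%R != 0 by rewrite rowA.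
rewrite sum_nat_eq0 negb_forall => /existsP [j].
by rewrite negb_imply delta_mult0 cards_eq0 => /andP [ji meet]; exists j.
Qed.

Lemma lambda1_disjoint i j1 j2 :
  j1 != i -> j2 != i -> j1 != j2 -> A i != set0 -> A j1 :&: A j2 = set0.
Proof.
move=> j1i j2i j12 /set0Pn [y Ay]; apply/eqP/set0Pn => -[x /setIP [A1x A2x]].
have := rowA i (y - x)%R.
rewrite (bigD1 j1) //= (bigD1 j2) /=; last by rewrite j2i eq_sym j12.
by have := delta_mult_gt0 Ay A1x; have := delta_mult_gt0 Ay A2x; lia.
Qed.

Lemma lambda1_card_le2 : (forall i, A i != set0) -> m <= 2.
Proof.
move=> A_neq0; rewrite leqNgt; apply/negP => m_gt2.
pose i0 := Ordinal (ltnW (ltnW m_gt2)).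
have [j ji meet] := lambda1_meet i0.
have [l /andP [li lj]] := exists_ord_neq2 i0 j m_gt2.
have i0l : i0 != l by rewrite eq_sym.
have jl : j != l by rewrite eq_sym.
have i0j : i0 != j by rewrite eq_sym.
by move: meet; rewrite (lambda1_disjoint i0l jl i0j (A_neq0 l)) eqxx.
Qed.

End LambdaOne.

Lemma is_SEDF1_m_eq2 (G : finZmodType) m k (A : 'I_m -> {set G}) :
  0 < k -> is_SEDF k 1 A -> m = 2.
Proof.
move=> k_gt0 [m_gt1 [cardA rowA]]; apply/eqP; rewrite eqn_leq m_gt1 andbT.
by apply: (lambda1_card_le2 rowA) => i; rewrite -card_gt0 cardA.
Qed.

Lemma sum_ord2_neq (F : 'I_2 -> nat) (i : 'I_2) :
  \sum_(j < 2 | j != i) F j = F (if i == ord0 then ord_max else ord0).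
Proof.
case: i => -[|[|//]] ?; rewrite big_mkcond !big_ord_recl big_ord0 /= ?addn0 //.
by congr F; apply: val_inj.
Qed.

Lemma is_SEDF2 (G : finZmodType) k lam (A : 'I_2 -> {set G}) :
  is_SEDF k lam A <->
  (forall i, #|A i| = k) /\ (forall g, delta_mult (A ord0) (A ord_max) g = lam).
Proof.
split=> [[_ [cardA rowA]] | [cardA AB]].
  by split=> // g; rewrite -(rowA ord0 g) sum_ord2_neq.
do 2!split=> //; case=> -[|[|//]] i_lt2 g; rewrite sum_ord2_neq /=.
  by rewrite -(AB g); congr delta_mult; congr A; apply: val_inj.
by rewrite delta_multN -(AB (- g)%R); congr delta_mult; congr A; apply: val_inj.
Qed.

Theorem theorem2p10 (G : finZmodType) (v m k : nat) :
  #|G| = v -> (1 < m)%N -> (1 <= k)%N ->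
  ((exists A : 'I_m -> {set G}, is_SEDF k 1 A) <-> (m = 2 /\ v = k ^ 2)%N).
Proof.
move=> <- m_gt1 k_gt0; split=> [[A sedfA] | [-> cardG]].
  have m2 := is_SEDF1_m_eq2 k_gt0 sedfA; subst m.
  have [cardA AB] := proj1 (is_SEDF2 _ _ _) sedfA.
  by rewrite -(card_mul_delta_mult1 AB) !cardA mulnn.
have [|H cardH [B HB]] := delta_mult1_exists (G := G) (d := k).
  by rewrite cardG dvdn_exp.
have cardB : #|B| = k.
  by apply/eqP; rewrite -(eqn_pmul2l k_gt0) -{1}cardH card_mul_delta_mult1 // cardG mulnn.
exists (fun i : 'I_2 => if i == ord0 then H else B); apply/is_SEDF2; split=> //.
by case=> -[|[|//]].
Qed.
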